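(* Let $\Gamma_0$ be a connected $G$-graph (resp. a connected abelian $G$-graph), and let $\Gamma$ be a multigraph all of whose connected components are isomorphic to $\Gamma_0$. Then $\Gamma$ is a $G$-graph (resp. an abelian $G$-graph).
   Context: Work in ZFC (axiom of choice assumed). For a group $G$ and a multiset $S$ of elements of $G$, $\Phi(G,S)$ is the multigraph (parallel edges allowed) whose vertex set is the union over the members $s$ of $S$ (with multiplicity, a repeated element giving a separate copy of its cosets per occurrence) of $V_s=\{\langle s\rangle x: x\in G\}$ (right cosets), with, for $\langle s\rangle x\in V_s$, $\langle t\rangle y\in V_t$, $s,t$ distinct members of $S$, one edge labeled $g$ between them for each $g\in\langle s\rangle x\cap\langle t\rangle y$, and no other edges. A $G$-graph is a multigraph isomorphic (ignoring labels) to some $\Phi(G,S)$; an abelian $G$-graph is one isomorphic to some $\Phi(G,S)$ with $G$ abelian. *)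

From Stdlib Require Import ZArith Relations.

Record group := Group {
  gcar :> Type;
  gmul : gcar -> gcar -> gcar;
  gone : gcar;
  ginv : gcar -> gcar;
  gmulA : forall x y z, gmul x (gmul y z) = gmul (gmul x y) z;
  gmul1g : forall x, gmul gone x = x;
  gmulg1 : forall x, gmul x gone = x;
  gmulVg : forall x, gmul (ginv x) x = gone;
  gmulgV : forall x, gmul x (ginv x) = gone
}.

Definition abelian (G : group) : Prop := forall x y : G, gmul G x y = gmul G y x.

Fixpoint gpow (G : group) (x : G) (n : nat) : G :=
  match n with O => gone G | S m => gmul G x (gpow G x m) end.

Definition zpow (G : group) (x : G) (z : Z) : G :=
  match z with
  | Z0 => gone G
  | Zpos p => gpow G x (Pos.to_nat p)
  | Zneg p => gpow G (ginv G x) (Pos.to_nat p)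
  end.

Definition rcoset (G : group) (s x : G) : G -> Prop :=
  fun g => exists z : Z, g = gmul G (zpow G s z) x.

Record multigraph := Multigraph {
  vert : Type;
  edge : Type;
  inc : edge -> vert -> Prop
}.

Definition is_multigraph (M : multigraph) : Prop :=
  forall e : edge M, exists u v : vert M,
    inc M e u /\ inc M e v /\ forall w, inc M e w -> w = u \/ w = v.

Definition bijective {A B : Type} (f : A -> B) : Prop :=
  (forall x y, f x = f y -> x = y) /\ (forall y, exists x, f x = y).

(** isomorphism ignoring labels *)
Definition iso (M N : multigraph) : Prop :=
  exists (f : vert M -> vert N) (g : edge M -> edge N),
    bijective f /\ bijective g /\
    forall e v, inc M e v <-> inc N (g e) (f v).

Definition adj (M : multigraph) (u v : vert M) : Prop :=
  exists e, inc M e u /\ inc M e v.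

Definition linked (M : multigraph) : vert M -> vert M -> Prop :=
  clos_refl_trans (vert M) (adj M).

Definition connected (M : multigraph) : Prop :=
  (exists v : vert M, True) /\ forall u v : vert M, linked M u v.

Definition component (M : multigraph) (v : vert M) : multigraph :=
  {| vert := { w : vert M | linked M v w };
     edge := { e : edge M | exists w, linked M v w /\ inc M e w };
     inc := fun e w => inc M (proj1_sig e) (proj1_sig w) |}.

(** * The multigraph Phi(G, S), S a multiset given as an indexed family
      s : I -> G (distinct indices = distinct members of S). *)
Definition Phi (G : group) (I : Type) (s : I -> G) : multigraph :=
  {| vert := { p : I * (G -> Prop) | exists x : G, snd p = rcoset G (s (fst p)) x };
     (* an edge: an unordered pair {i,j} of distinct members and a label g *)
     edge := { p : (I -> Prop) * G |
               exists i j : I, i <> j /\ fst p = (fun k => k = i \/ k = j) };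
     (* the edge ({i,j}, g) joins the coset of <s_i> and of <s_j> containing g *)
     inc := fun e v =>
              fst (proj1_sig e) (fst (proj1_sig v)) /\
              snd (proj1_sig v) (snd (proj1_sig e)) |}.

Definition is_Ggraph (M : multigraph) : Prop :=
  exists (G : group) (I : Type) (s : I -> G), iso (Phi G I s) M.

Definition is_abelian_Ggraph (M : multigraph) : Prop :=
  exists (G : group) (I : Type) (s : I -> G), abelian G /\ iso (Phi G I s) M.

(** Write Gamma as the disjoint union, over the set K of its connected components, of
    copies of Gamma0 = Phi(G, S).  Every nonempty set, hence K, carries an abelian
    group structure A (for finite K a cyclic group; for infinite K a maximal abelian
    group structure on a subset D of K with |D| = |D + D| is shown by Zorn's lemma
    to have |D| = |K|).  Then Phi(G x A, S x {1}) is the disjoint union of |A|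
    copies of Phi(G, S): the cosets of <(s, 1)> are the products of cosets of <s>
    with singletons of A.  So Gamma is a (G x A)-graph, abelian if G is. *)
From Pilot Require Import Defs.
From mathcomp Require ssreflect ssrfun ssrbool eqtype ssrnat boolp wochoice
  classical_sets cardinality.
From Stdlib Require Import ClassicalEpsilon FunctionalExtensionality
  PropExtensionality ProofIrrelevance Classical Lia FinFun ZArith Relations.

Lemma sig_eq (A : Type) (P : A -> Prop) (a b : sig P) :
  proj1_sig a = proj1_sig b -> a = b.
Proof. apply eq_sig_hprop; intros; apply proof_irrelevance. Qed.

Module CardinalFacts.
Import ssreflect ssrfun ssrbool eqtype ssrnat boolp wochoice classical_sets
  cardinality.
Local Open Scope classical_set_scope.
Local Open Scope card_scope.

Lemma zorn_pred (T : Type) (R : T -> T -> Prop) (S : T -> Prop) :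
  (forall x, S x -> R x x) ->
  (forall x y z, S x -> S y -> S z -> R x y -> R y z -> R x z) ->
  (forall C : T -> Prop, (forall x, C x -> S x) ->
     (forall x y, C x -> C y -> R x y \/ R y x) ->
     exists z, S z /\ forall x, C x -> R x z) ->
  exists z, S z /\ forall x, S x -> R z x -> R x z.
Proof.
move=> Rxx Rtr ub.
have [] := @Zorn's_lemma {classic T} (fun x y => `[< R x y >]) (fun x => `[< S x >]).
- by move=> x /asboolP Sx; apply/asboolP; apply: Rxx.
- move=> y x z /asboolP Sy /asboolP Sx /asboolP Sz /asboolP Rxy /asboolP Ryz.
  by apply/asboolP; apply: (Rtr x y z).
- move=> C CS /wo_chainW Ctot.
  have [|z [Sz Cz]] := ub (fun x => x \in C) (fun x Cx => elimT (asboolP _) (CS x Cx)).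
    by move=> x y Cx Cy; case/orP: (Ctot x y Cx Cy) => /asboolP; [left|right].
  by exists z; [apply/asboolP | move=> x Cx; apply/asboolP; apply: Cz].
- move=> z /asboolP Sz zmax; exists z; split=> // x Sx Rzx.
  by apply/asboolP; apply: (zmax x); apply/asboolP.
Qed.

Lemma bijection_of_injections (A B : Type) (f : A -> B) (g : B -> A) :
  injective f -> injective g -> exists h : A -> B, Defs.bijective h.
Proof.
elim/Ppointed: A f g => A f g injf injg.
  by exists f; split=> [x|y]; [case: (no x) | case: (no (g y))].
elim/Ppointed: B f g injf injg => B f g injf injg.
  by case: (no (f point)).
have /card_set_bijP[h [_ injh surjh]] : [set: A] #= [set: B].
  apply: Cantor_Bernstein; apply/pcard_injP.
  - by exists f => x y _ _; apply: injf.
  - by exists g => x y _ _; apply: injg.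
exists h; split=> [x y|y]; first by apply: injh; rewrite inE.
by have [x _ <-] := surjh y I; exists x.
Qed.

Lemma finite_or_embeds_nat (X : Type) :
  (exists n (f : {i | (i < n)%coq_nat} -> X), Defs.bijective f) \/
  exists iota : nat -> X, injective iota.
Proof.
elim/Ppointed: X => X.
  left; exists 0, (fun i => False_rect _ (PeanoNat.Nat.nlt_0_r _ (proj2_sig i))).
  by split=> [[i /PeanoNat.Nat.nlt_0_r []]|y]; case: (no y).
have [/finite_setP[n]|/infiniteP/pcard_injP[iota injiota]] :=
  pselect (finite_set [set: X]).
  rewrite card_eq_sym => /card_set_bijP[f [_ injf surjf]].
  left; exists n, (fun i => f (proj1_sig i)).
  split=> [[i i_lt] [j j_lt] /= fij|y].
    by apply: sig_eq; apply: injf => //; apply/mem_set/ltP.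
  by have [i i_lt <-] := surjf y I; exists (exist _ i (elimT ltP i_lt)).
by right; exists iota => x y; apply: injiota; rewrite inE.
Qed.

End CardinalFacts.
Import CardinalFacts.



Section InjectionComparable.
Variables U V : Type.

Definition partial_bijection (P : U -> V -> Prop) : Prop :=
  (forall u v v', P u v -> P u v' -> v = v') /\
  (forall u u' v, P u v -> P u' v -> u = u').

Lemma chain_union_partial_bijection (C : (U -> V -> Prop) -> Prop) :
  (forall P, C P -> partial_bijection P) ->
  (forall P Q, C P -> C Q -> (forall u v, P u v -> Q u v) \/ (forall u v, Q u v -> P u v)) ->
  partial_bijection (fun u v => exists P, C P /\ P u v).
Proof.
  intros CS Cch. split.
  - intros u v v' [P [CP Puv]] [Q [CQ Quv']].
    destruct (Cch P Q CP CQ) as [PQ|QP].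
    + apply (proj1 (CS Q CQ) u); auto.
    + apply (proj1 (CS P CP) u); auto.
  - intros u u' v [P [CP Puv]] [Q [CQ Qu'v]].
    destruct (Cch P Q CP CQ) as [PQ|QP].
    + apply (proj2 (CS Q CQ) u u' v); auto.
    + apply (proj2 (CS P CP) u u' v); auto.
Qed.

Lemma partial_bijection_add (P : U -> V -> Prop) u0 v0 :
  partial_bijection P -> (forall v, ~ P u0 v) -> (forall u, ~ P u v0) ->
  partial_bijection (fun u v => P u v \/ (u = u0 /\ v = v0)).
Proof.
  intros [Pfun Pinj] Hu0 Hv0. split.
  - intros u v v' [H|[E1 E2]] [H'|[E1' E2']]; subst; eauto;
      exfalso; eapply Hu0; eauto.
  - intros u u' v [H|[E1 E2]] [H'|[E1' E2']]; subst; eauto;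
      exfalso; eapply Hv0; eauto.
Qed.

(* A maximal partial bijection is total on U or onto V. *)
Lemma injection_comparable :
  (exists f : U -> V, Injective f) \/ (exists g : V -> U, Injective g).
Proof.
  destruct (zorn_pred (U -> V -> Prop) (fun P Q => forall u v, P u v -> Q u v)
              partial_bijection) as [M [PM Mmax]]; auto.
  - intros C CS Cch. exists (fun u v => exists P, C P /\ P u v). split.
    + apply chain_union_partial_bijection; auto.
    + intros P CP u v Puv. eauto.
  - destruct (classic (forall u, exists v, M u v)) as [Mtot|[u0 Hu0]%not_all_ex_not].
    + destruct (choice _ Mtot) as [f Mf]. left. exists f.
      intros x y E. apply (proj2 PM x y (f y)); [rewrite <- E|]; auto.
    + destruct (classic (forall v, exists u, M u v)) as [Monto|[v0 Hv0]%not_all_ex_not].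
      * destruct (choice _ Monto) as [g Mg]. right. exists g.
        intros x y E. apply (proj1 PM (g y) x y); [rewrite <- E|]; auto.
      * exfalso. apply Hv0. exists u0.
        apply (Mmax _ (partial_bijection_add M u0 v0 PM
                   (fun v H => Hu0 (ex_intro _ v H)) (fun u H => Hv0 (ex_intro _ u H)))).
        -- intros u v H. left; exact H.
        -- right; auto.
Qed.
End InjectionComparable.

Definition Zmod_group (n : nat) (n_gt0 : 0 < n) : group.
Proof.
  assert (n_neq0 : n <> 0) by lia.
  refine (Group {i | i < n}
    (fun a b => exist _ ((proj1_sig a + proj1_sig b) mod n) (Nat.mod_upper_bound _ _ n_neq0))
    (exist _ 0 n_gt0)
    (fun a => exist _ ((n - proj1_sig a) mod n) (Nat.mod_upper_bound _ _ n_neq0))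
    _ _ _ _ _).
  - intros [a Ha] [b Hb] [c Hc]; apply sig_eq; simpl.
    rewrite Nat.Div0.add_mod_idemp_r, Nat.Div0.add_mod_idemp_l, Nat.add_assoc; auto.
  - intros [a Ha]; apply sig_eq; simpl. apply Nat.mod_small; auto.
  - intros [a Ha]; apply sig_eq; simpl. rewrite Nat.add_0_r. apply Nat.mod_small; auto.
  - intros [a Ha]; apply sig_eq; simpl. rewrite Nat.Div0.add_mod_idemp_l.
    replace (n - a + a) with n by lia. apply Nat.Div0.mod_same.
  - intros [a Ha]; apply sig_eq; simpl. rewrite Nat.Div0.add_mod_idemp_r.
    replace (a + (n - a)) with n by lia. apply Nat.Div0.mod_same.
Defined.

Lemma Zmod_group_abelian n n_gt0 : abelian (Zmod_group n n_gt0).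
Proof. intros [a Ha] [b Hb]; apply sig_eq; simpl; rewrite Nat.add_comm; auto. Qed.

Section AbelianGroupOnInfiniteType.
Variable X : Type.

(* An abelian group law on a subset [dom] of [X], together with a bijection
   [ddouble] from [bool * dom] onto [dom]. *)
Record dstruct := DStruct {
  dom : X -> Prop;
  dmul : X -> X -> X;
  dunit : X;
  dinv : X -> X;
  ddouble : bool -> X -> X }.

Record dstruct_ok (S : dstruct) : Prop := {
  dunit_in : dom S (dunit S);
  dmul_in : forall x y, dom S x -> dom S y -> dom S (dmul S x y);
  dinv_in : forall x, dom S x -> dom S (dinv S x);
  dmulA : forall x y z, dom S x -> dom S y -> dom S z ->
    dmul S x (dmul S y z) = dmul S (dmul S x y) z;
  dmul1 : forall x, dom S x -> dmul S (dunit S) x = x;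
  dmulV : forall x, dom S x -> dmul S (dinv S x) x = dunit S;
  dmulC : forall x y, dom S x -> dom S y -> dmul S x y = dmul S y x;
  ddouble_in : forall b x, dom S x -> dom S (ddouble S b x);
  ddouble_inj : forall b b' x x', dom S x -> dom S x' ->
    ddouble S b x = ddouble S b' x' -> b = b' /\ x = x';
  ddouble_onto : forall y, dom S y -> exists b x, dom S x /\ ddouble S b x = y }.

Record dextends (S T : dstruct) : Prop := {
  dextends_dom : forall x, dom S x -> dom T x;
  dextends_mul : forall x y, dom S x -> dom S y -> dmul S x y = dmul T x y;
  dextends_unit : dunit S = dunit T;
  dextends_inv : forall x, dom S x -> dinv S x = dinv T x;
  dextends_double : forall b x, dom S x -> ddouble S b x = ddouble T b x }.

Arguments dunit_in {S}. Arguments dmul_in {S}. Arguments dinv_in {S}.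
Arguments dmulA {S}. Arguments dmul1 {S}. Arguments dmulV {S}. Arguments dmulC {S}.
Arguments ddouble_in {S}. Arguments ddouble_inj {S}. Arguments ddouble_onto {S}.
Arguments dextends_dom {S T}. Arguments dextends_mul {S T}.
Arguments dextends_unit {S T}. Arguments dextends_inv {S T}.
Arguments dextends_double {S T}.

Lemma dextends_refl S : dextends S S.
Proof. constructor; auto. Qed.

Lemma dextends_trans S T U : dextends S T -> dextends T U -> dextends S U.
Proof.
  intros [d1 m1 u1 i1 b1] [d2 m2 u2 i2 b2]; constructor; intros; auto.
  - rewrite m1; auto.
  - congruence.
  - rewrite i1; auto.
  - rewrite b1; auto.
Qed.

Section NatStructure.
Variable iota : nat -> X.
Hypothesis iota_inj : Injective iota.

Definition iota_index (x : X) : nat := epsilon (inhabits 0) (fun n => x = iota n).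

Lemma iota_indexK n : iota_index (iota n) = n.
Proof.
  apply iota_inj. symmetry.
  apply (epsilon_spec (inhabits 0) (fun k => iota n = iota k)). eauto.
Qed.

Definition nat_dstruct : dstruct := {|
  dom := fun x => exists n, x = iota n;
  dmul := fun x y => iota (Nat.lxor (iota_index x) (iota_index y));
  dunit := iota 0;
  dinv := fun x => x;
  ddouble := fun b x => iota (2 * iota_index x + Nat.b2n b) |}.

Lemma nat_dstruct_ok : dstruct_ok nat_dstruct.
Proof.
  constructor; simpl.
  - exists 0; auto.
  - intros; eauto.
  - auto.
  - intros x y z [a ->] [b ->] [c ->]. rewrite !iota_indexK, Nat.lxor_assoc; auto.
  - intros x [a ->]. rewrite !iota_indexK, Nat.lxor_0_l; auto.
  - intros x [a ->]. rewrite !iota_indexK, Nat.lxor_nilpotent; auto.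
  - intros x y [a ->] [b ->]. rewrite !iota_indexK, Nat.lxor_comm; auto.
  - intros; eauto.
  - intros b b' x x' [a ->] [c ->] E. apply iota_inj in E. rewrite !iota_indexK in E.
    destruct b, b'; simpl in E; split; try f_equal; lia.
  - intros y [n ->]. exists (Nat.odd n), (iota (Nat.div2 n)). split; eauto.
    rewrite iota_indexK. f_equal. symmetry. apply Nat.div2_odd.
Qed.
End NatStructure.

Section ChainUnion.
Variable C : dstruct -> Prop.
Hypothesis C_ok : forall S, C S -> dstruct_ok S.
Hypothesis C_chain : forall S T, C S -> C T -> dextends S T \/ dextends T S.
Variable S0 : dstruct.
Hypothesis C_S0 : C S0.

Definition chain_pick (P : dstruct -> Prop) : dstruct := epsilon (inhabits S0) P.

Definition chain_union : dstruct := {|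
  dom := fun x => exists S, C S /\ dom S x;
  dmul := fun x y => dmul (chain_pick (fun S => C S /\ dom S x /\ dom S y)) x y;
  dunit := dunit S0;
  dinv := fun x => dinv (chain_pick (fun S => C S /\ dom S x)) x;
  ddouble := fun b x => ddouble (chain_pick (fun S => C S /\ dom S x)) b x |}.

Lemma chain_pick_spec (P : dstruct -> Prop) S :
  P S -> P (chain_pick P).
Proof. intros PS. unfold chain_pick. apply epsilon_spec. eauto. Qed.

Lemma chain_union_mul S x y : C S -> dom S x -> dom S y ->
  dmul chain_union x y = dmul S x y.
Proof.
  intros CS Sx Sy. simpl.
  destruct (chain_pick_spec (fun S => C S /\ dom S x /\ dom S y) S)
    as [CT [Tx Ty]]; auto.
  destruct (C_chain S _ CS CT) as [ST|TS].
  - symmetry; apply (dextends_mul ST); auto.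
  - apply (dextends_mul TS); auto.
Qed.

Lemma chain_union_inv S x : C S -> dom S x -> dinv chain_union x = dinv S x.
Proof.
  intros CS Sx. simpl.
  destruct (chain_pick_spec (fun S => C S /\ dom S x) S) as [CT Tx]; auto.
  destruct (C_chain S _ CS CT) as [ST|TS].
  - symmetry; apply (dextends_inv ST); auto.
  - apply (dextends_inv TS); auto.
Qed.

Lemma chain_union_double S b x : C S -> dom S x ->
  ddouble chain_union b x = ddouble S b x.
Proof.
  intros CS Sx. simpl.
  destruct (chain_pick_spec (fun S => C S /\ dom S x) S) as [CT Tx]; auto.
  destruct (C_chain S _ CS CT) as [ST|TS].
  - symmetry; apply (dextends_double ST); auto.
  - apply (dextends_double TS); auto.
Qed.

Lemma chain_union_unit S : C S -> dunit chain_union = dunit S.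
Proof.
  intros CS. simpl. destruct (C_chain S S0 CS C_S0) as [ST|TS].
  - symmetry; apply (dextends_unit ST).
  - apply (dextends_unit TS).
Qed.

Lemma chain_common S T : C S -> C T ->
  exists U, C U /\ dextends S U /\ dextends T U.
Proof.
  intros CS CT. destruct (C_chain S T CS CT) as [ST|TS].
  - exists T; auto using dextends_refl.
  - exists S; auto using dextends_refl.
Qed.

Lemma chain_union_common3 x y z :
  dom chain_union x -> dom chain_union y -> dom chain_union z ->
  exists S, C S /\ dom S x /\ dom S y /\ dom S z.
Proof.
  intros [S1 [C1 H1]] [S2 [C2 H2]] [S3 [C3 H3]].
  destruct (chain_common S1 S2 C1 C2) as [T [CT [E1 E2]]].
  destruct (chain_common T S3 CT C3) as [U [CU [E E3]]].
  exists U. repeat split; auto.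
  - apply (dextends_dom E), (dextends_dom E1); auto.
  - apply (dextends_dom E), (dextends_dom E2); auto.
  - apply (dextends_dom E3); auto.
Qed.

Lemma chain_union_ok : dstruct_ok chain_union.
Proof.
  constructor.
  - exists S0. split; auto. apply (dunit_in (C_ok _ C_S0)).
  - intros x y Hx Hy.
    destruct (chain_union_common3 x y y Hx Hy Hy) as [S [CS [Sx [Sy _]]]].
    rewrite (chain_union_mul S); auto. exists S; split; auto.
    apply (dmul_in (C_ok _ CS)); auto.
  - intros x Hx. destruct (chain_union_common3 x x x Hx Hx Hx) as [S [CS [Sx _]]].
    rewrite (chain_union_inv S); auto. exists S; split; auto.
    apply (dinv_in (C_ok _ CS)); auto.
  - intros x y z Hx Hy Hz.
    destruct (chain_union_common3 x y z Hx Hy Hz) as [S [CS [Sx [Sy Sz]]]].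
    pose proof (C_ok _ CS) as OK.
    rewrite (chain_union_mul S y z), (chain_union_mul S x y), (chain_union_mul S x),
      (chain_union_mul S _ z); auto; try apply (dmul_in OK); auto.
    apply (dmulA OK); auto.
  - intros x Hx. destruct (chain_union_common3 x x x Hx Hx Hx) as [S [CS [Sx _]]].
    pose proof (C_ok _ CS) as OK. rewrite (chain_union_unit S CS), (chain_union_mul S); auto.
    + apply (dmul1 OK); auto.
    + apply (dunit_in OK).
  - intros x Hx. destruct (chain_union_common3 x x x Hx Hx Hx) as [S [CS [Sx _]]].
    pose proof (C_ok _ CS) as OK.
    rewrite (chain_union_unit S CS), (chain_union_inv S), (chain_union_mul S); auto.
    + apply (dmulV OK); auto.
    + apply (dinv_in OK); auto.
  - intros x y Hx Hy. destruct (chain_union_common3 x y y Hx Hy Hy) as [S [CS [Sx [Sy _]]]].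
    pose proof (C_ok _ CS) as OK.
    rewrite (chain_union_mul S), (chain_union_mul S y x); auto. apply (dmulC OK); auto.
  - intros b x Hx. destruct (chain_union_common3 x x x Hx Hx Hx) as [S [CS [Sx _]]].
    rewrite (chain_union_double S); auto. exists S; split; auto.
    apply (ddouble_in (C_ok _ CS)); auto.
  - intros b b' x x' Hx Hx' E.
    destruct (chain_union_common3 x x' x' Hx Hx' Hx') as [S [CS [Sx [Sx' _]]]].
    rewrite (chain_union_double S), (chain_union_double S _ x') in E; auto.
    apply (ddouble_inj (C_ok _ CS)) in E; auto.
  - intros y [S [CS Sy]]. destruct (ddouble_onto (C_ok _ CS) y Sy) as [b [x [Sx E]]].
    exists b, x. split; [exists S; auto|]. rewrite (chain_union_double S); auto.
Qed.

Lemma chain_union_ub S : C S -> dextends S chain_union.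
Proof.
  intros CS. constructor.
  - intros x Hx; exists S; auto.
  - intros; symmetry; apply chain_union_mul; auto.
  - symmetry; apply chain_union_unit; auto.
  - intros; symmetry; apply chain_union_inv; auto.
  - intros; symmetry; apply chain_union_double; auto.
Qed.
End ChainUnion.

(* Given an injection [copy] of [dom M] into its complement, extend [M] to
   [dom M + copy (dom M)], with group [dom M * Z/2]: [tag a c] is [a] or its copy. *)
Section DisjointCopy.
Variable M : dstruct.
Hypothesis M_ok : dstruct_ok M.
Variable copy : X -> X.
Hypothesis copy_out : forall x, dom M x -> ~ dom M (copy x).
Hypothesis copy_inj : forall x y, dom M x -> dom M y -> copy x = copy y -> x = y.

Definition uncopy x := epsilon (inhabits (dunit M)) (fun y => dom M y /\ x = copy y).

Lemma copyK y : dom M y -> uncopy (copy y) = y.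
Proof.
  intros My. unfold uncopy.
  destruct (epsilon_spec (inhabits (dunit M)) (fun y' => dom M y' /\ copy y = copy y'))
    as [My' E]; eauto.
Qed.

Definition tag (y : X) (c : bool) := if c then copy y else y.
Definition untag x := if excluded_middle_informative (dom M x) then x else uncopy x.
Definition tag_bit x := if excluded_middle_informative (dom M x) then false else true.

Lemma tagK y c : dom M y -> untag (tag y c) = y.
Proof.
  intros My; unfold untag, tag.
  destruct c, (excluded_middle_informative _) as [H|H]; auto.
  - exfalso; apply (copy_out y); auto.
  - apply copyK; auto.
  - contradiction.
Qed.

Lemma tag_bitK y c : dom M y -> tag_bit (tag y c) = c.
Proof.
  intros My; unfold tag_bit, tag.
  destruct c, (excluded_middle_informative _) as [H|H]; auto.
  - exfalso; apply (copy_out y); auto.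
  - contradiction.
Qed.

Lemma tag_inj a a' c c' : dom M a -> dom M a' -> tag a c = tag a' c' -> a = a' /\ c = c'.
Proof.
  intros Ma Ma' E. split.
  - rewrite <- (tagK a c), <- (tagK a' c'), E; auto.
  - rewrite <- (tag_bitK a c), <- (tag_bitK a' c'), E; auto.
Qed.

Definition copy_dom x := dom M x \/ exists y, dom M y /\ x = copy y.

Lemma copy_domP x : copy_dom x -> exists a c, dom M a /\ x = tag a c.
Proof.
  intros [H|[y [My ->]]].
  - exists x, false; auto.
  - exists y, true; auto.
Qed.

Lemma tag_in a c : dom M a -> copy_dom (tag a c).
Proof. intros; destruct c; simpl; [right; eauto | left; auto]. Qed.

Definition copy_dstruct : dstruct := {|
  dom := copy_dom;
  dmul := fun x y => tag (dmul M (untag x) (untag y)) (xorb (tag_bit x) (tag_bit y));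
  dunit := dunit M;
  dinv := fun x => tag (dinv M (untag x)) (tag_bit x);
  ddouble := fun b x => if excluded_middle_informative (dom M x) then ddouble M b x
                        else copy (ddouble M b (uncopy x)) |}.

Lemma copy_mul a c a' c' : dom M a -> dom M a' ->
  dmul copy_dstruct (tag a c) (tag a' c') = tag (dmul M a a') (xorb c c').
Proof. intros; simpl; rewrite !tagK, !tag_bitK; auto. Qed.

Lemma copy_inv a c : dom M a -> dinv copy_dstruct (tag a c) = tag (dinv M a) c.
Proof. intros; simpl; rewrite !tagK, !tag_bitK; auto. Qed.

Lemma copy_double b a c : dom M a ->
  ddouble copy_dstruct b (tag a c) = tag (ddouble M b a) c.
Proof.
  intros Ma; simpl.
  destruct c; simpl; destruct (excluded_middle_informative _) as [H|H]; auto.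
  - exfalso; apply (copy_out a); auto.
  - rewrite copyK; auto.
  - contradiction.
Qed.

Lemma copy_dstruct_ok : dstruct_ok copy_dstruct.
Proof.
  constructor.
  - left; apply (dunit_in M_ok).
  - intros x y Hx Hy. destruct (copy_domP x Hx) as [a [c [Ma ->]]].
    destruct (copy_domP y Hy) as [a' [c' [Ma' ->]]]. rewrite copy_mul; auto.
    apply tag_in, (dmul_in M_ok); auto.
  - intros x Hx. destruct (copy_domP x Hx) as [a [c [Ma ->]]]. rewrite copy_inv; auto.
    apply tag_in, (dinv_in M_ok); auto.
  - intros x y z Hx Hy Hz. destruct (copy_domP x Hx) as [a [c [Ma ->]]].
    destruct (copy_domP y Hy) as [a' [c' [Ma' ->]]].
    destruct (copy_domP z Hz) as [a'' [c'' [Ma'' ->]]].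
    rewrite !copy_mul; auto; try apply (dmul_in M_ok); auto.
    rewrite (dmulA M_ok), Bool.xorb_assoc; auto.
  - intros x Hx. destruct (copy_domP x Hx) as [a [c [Ma ->]]].
    change (dunit copy_dstruct) with (tag (dunit M) false).
    rewrite copy_mul, (dmul1 M_ok); auto. apply (dunit_in M_ok).
  - intros x Hx. destruct (copy_domP x Hx) as [a [c [Ma ->]]].
    rewrite copy_inv, copy_mul, (dmulV M_ok), Bool.xorb_nilpotent; auto.
    apply (dinv_in M_ok); auto.
  - intros x y Hx Hy. destruct (copy_domP x Hx) as [a [c [Ma ->]]].
    destruct (copy_domP y Hy) as [a' [c' [Ma' ->]]]. rewrite !copy_mul; auto.
    rewrite (dmulC M_ok), Bool.xorb_comm; auto.
  - intros b x Hx. destruct (copy_domP x Hx) as [a [c [Ma ->]]]. rewrite copy_double; auto.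
    apply tag_in, (ddouble_in M_ok); auto.
  - intros b b' x x' Hx Hx' E. destruct (copy_domP x Hx) as [a [c [Ma ->]]].
    destruct (copy_domP x' Hx') as [a' [c' [Ma' ->]]]. rewrite !copy_double in E; auto.
    apply tag_inj in E; try apply (ddouble_in M_ok); auto. destruct E as [E1 E2].
    apply (ddouble_inj M_ok) in E1; auto. destruct E1; subst; auto.
  - intros y Hy. destruct (copy_domP y Hy) as [a [c [Ma ->]]].
    destruct (ddouble_onto M_ok a Ma) as [b [x [Mx E]]]. exists b, (tag x c). split.
    + apply tag_in; auto.
    + rewrite copy_double, E; auto.
Qed.

Lemma copy_dstruct_extends : dextends M copy_dstruct.
Proof.
  constructor.
  - intros x Hx; left; auto.
  - intros x y Hx Hy. change (dmul copy_dstruct x y)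
      with (dmul copy_dstruct (tag x false) (tag y false)).
    rewrite copy_mul; auto.
  - auto.
  - intros x Hx. change (dinv copy_dstruct x) with (dinv copy_dstruct (tag x false)).
    rewrite copy_inv; auto.
  - intros b x Hx. change (ddouble copy_dstruct b x)
      with (ddouble copy_dstruct b (tag x false)).
    rewrite copy_double; auto.
Qed.

Lemma copy_dstruct_grows : dom copy_dstruct (copy (dunit M)) /\ ~ dom M (copy (dunit M)).
Proof.
  pose proof (dunit_in M_ok).
  split; [right; exists (dunit M); auto | apply copy_out; auto].
Qed.
End DisjointCopy.

Definition dstruct_group (S : dstruct) (S_ok : dstruct_ok S) : group.
Proof.
  refine (Group {x | dom S x}
    (fun a b => exist _ (dmul S (proj1_sig a) (proj1_sig b))
                  (dmul_in S_ok _ _ (proj2_sig a) (proj2_sig b)))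
    (exist _ (dunit S) (dunit_in S_ok))
    (fun a => exist _ (dinv S (proj1_sig a)) (dinv_in S_ok _ (proj2_sig a)))
    _ _ _ _ _).
  - intros [x Hx] [y Hy] [z Hz]; apply sig_eq; simpl; apply (dmulA S_ok); auto.
  - intros [x Hx]; apply sig_eq; simpl; apply (dmul1 S_ok); auto.
  - intros [x Hx]; apply sig_eq; simpl.
    rewrite (dmulC S_ok); [apply (dmul1 S_ok)|..]; auto. apply (dunit_in S_ok).
  - intros [x Hx]; apply sig_eq; simpl; apply (dmulV S_ok); auto.
  - intros [x Hx]; apply sig_eq; simpl.
    rewrite (dmulC S_ok); [apply (dmulV S_ok)|..]; auto. apply (dinv_in S_ok); auto.
Defined.

Lemma dstruct_group_abelian S S_ok : abelian (dstruct_group S S_ok).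
Proof. intros [x Hx] [y Hy]; apply sig_eq; simpl; apply (dmulC S_ok); auto. Qed.

Lemma maximal_dstruct_exists : (exists iota : nat -> X, Injective iota) ->
  exists M, dstruct_ok M /\ forall S, dstruct_ok S -> dextends M S -> dextends S M.
Proof.
  intros [iota iota_inj].
  apply zorn_pred.
  - intros; apply dextends_refl.
  - intros x y z _ _ _; apply dextends_trans.
  - intros C C_ok C_chain. destruct (classic (exists S0, C S0)) as [[S0 CS0]|NC].
    + exists (chain_union C S0).
      split; [apply chain_union_ok | apply chain_union_ub]; auto.
    + exists (nat_dstruct iota). split; [apply nat_dstruct_ok; auto|].
      intros S CS; exfalso; eauto.
Qed.

Section MaximalDstruct.
Variable M : dstruct.
Hypothesis M_ok : dstruct_ok M.
Hypothesis M_max : forall S, dstruct_ok S -> dextends M S -> dextends S M.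

Lemma maximal_no_disjoint_copy (f : {x | dom M x} -> {x | ~ dom M x}) : ~ Injective f.
Proof.
  intros f_inj.
  pose (copy x := match excluded_middle_informative (dom M x) with
                  | left H => proj1_sig (f (exist _ x H))
                  | right _ => x end).
  assert (copy_out : forall x, dom M x -> ~ dom M (copy x)).
  { intros x Hx. unfold copy. destruct (excluded_middle_informative _) as [H|H].
    - apply (proj2_sig (f _)).
    - contradiction. }
  assert (copy_inj : forall x y, dom M x -> dom M y -> copy x = copy y -> x = y).
  { intros x y Hx Hy. unfold copy.
    destruct (excluded_middle_informative (dom M x)) as [H|H]; [|contradiction].
    destruct (excluded_middle_informative (dom M y)) as [H'|H']; [|contradiction].
    intros E. apply sig_eq, f_inj in E. apply (f_equal (@proj1_sig _ _)) in E. exact E. }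
  destruct (copy_dstruct_grows M M_ok copy copy_out) as [In Out].
  apply Out, (dextends_dom (M_max _ (copy_dstruct_ok M M_ok copy copy_out copy_inj)
                              (copy_dstruct_extends M copy copy_out copy_inj))), In.
Qed.

(* [dom M] absorbs its complement because [ddouble] splits it into two copies of itself. *)
Lemma maximal_dom_absorbs (g : {x | ~ dom M x} -> {x | dom M x}) :
  Injective g -> exists j : X -> {x | dom M x}, Injective j.
Proof.
  intros g_inj.
  exists (fun x => match excluded_middle_informative (dom M x) with
           | left H => exist (dom M) (ddouble M false x) (ddouble_in M_ok false x H)
           | right H => exist (dom M) (ddouble M true (proj1_sig (g (exist _ x H))))
                          (ddouble_in M_ok true _ (proj2_sig (g (exist _ x H)))) end).
  intros x y.
  destruct (excluded_middle_informative (dom M x)) as [Hx|Hx],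
           (excluded_middle_informative (dom M y)) as [Hy|Hy];
    intros E; apply (f_equal (@proj1_sig _ _)) in E; simpl in E;
    apply (ddouble_inj M_ok) in E; try apply (proj2_sig (g _)); auto;
    destruct E as [E1 E2]; try discriminate; try assumption.
  apply sig_eq, g_inj in E2. apply (f_equal (@proj1_sig _ _)) in E2. exact E2.
Qed.

Lemma maximal_dom_equipotent : exists h : {x | dom M x} -> X, bijective h.
Proof.
  destruct (injection_comparable {x | dom M x} {x | ~ dom M x}) as [[f f_inj]|[g g_inj]].
  - exfalso; exact (maximal_no_disjoint_copy f f_inj).
  - destruct (maximal_dom_absorbs g g_inj) as [j j_inj].
    apply (bijection_of_injections _ _ (@proj1_sig _ _) j); auto.
    intros a b; apply sig_eq.
Qed.
End MaximalDstruct.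

Lemma abelian_group_on_infinite_type : (exists iota : nat -> X, Injective iota) ->
  exists A : group, abelian A /\ exists f : A -> X, bijective f.
Proof.
  intros Hinf. destruct (maximal_dstruct_exists Hinf) as [M [M_ok M_max]].
  exists (dstruct_group M M_ok). split; [apply dstruct_group_abelian|].
  apply maximal_dom_equipotent; auto.
Qed.
End AbelianGroupOnInfiniteType.

Lemma abelian_group_on_inhabited_type (X : Type) : inhabited X ->
  exists A : group, abelian A /\ exists f : A -> X, bijective f.
Proof.
  intros [x0]. destruct (finite_or_embeds_nat X) as [[n [f f_bij]]|Hinf].
  - assert (n_gt0 : 0 < n).
    { destruct (proj2 f_bij x0) as [[i i_lt] _]. lia. }
    exists (Zmod_group n n_gt0). split; [apply Zmod_group_abelian|].
    exists f; exact f_bij.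
  - apply abelian_group_on_infinite_type; exact Hinf.
Qed.

Lemma bijective_inverse (A B : Type) (f : A -> B) : bijective f ->
  exists g : B -> A, bijective g /\ forall y, f (g y) = y.
Proof.
  intros [f_inj f_onto]. destruct (choice _ f_onto) as [g fgK].
  exists g. repeat split; auto.
  - intros x y E. rewrite <- (fgK x), <- (fgK y), E; auto.
  - intros x. exists (f x); auto.
Qed.

Lemma bijective_comp (A B C : Type) (f : A -> B) (g : B -> C) :
  bijective f -> bijective g -> bijective (fun x => g (f x)).
Proof.
  intros [f_inj f_onto] [g_inj g_onto]; split.
  - intros x y E; apply f_inj, g_inj, E.
  - intros z. destruct (g_onto z) as [y <-]. destruct (f_onto y) as [x <-]. eauto.
Qed.

Lemma bijective_pair (A A' B B' : Type) (f : A -> A') (g : B -> B') :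
  bijective f -> bijective g -> bijective (fun p : A * B => (f (fst p), g (snd p))).
Proof.
  intros [f_inj f_onto] [g_inj g_onto]; split.
  - intros [a b] [c d] E; simpl in E. injection E; intros; f_equal; auto.
  - intros [a' b']. destruct (f_onto a') as [a <-], (g_onto b') as [b <-].
    exists (a, b); auto.
Qed.

Lemma iso_sym M N : iso M N -> iso N M.
Proof.
  intros [f [g [f_bij [g_bij Hinc]]]].
  destruct (bijective_inverse _ _ f f_bij) as [f' [f'_bij ff'K]].
  destruct (bijective_inverse _ _ g g_bij) as [g' [g'_bij gg'K]].
  exists f', g'. split; [exact f'_bij | split; [exact g'_bij |]].
  intros e v; split; intros H.
  - apply Hinc. rewrite ff'K, gg'K; auto.
  - apply Hinc in H. rewrite ff'K, gg'K in H; auto.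
Qed.

Lemma iso_trans M N P : iso M N -> iso N P -> iso M P.
Proof.
  intros [f [g [f_bij [g_bij Hinc]]]] [f' [g' [f'_bij [g'_bij Hinc']]]].
  exists (fun x => f' (f x)), (fun x => g' (g x)).
  split; [|split]; try apply bijective_comp; auto.
  intros e v; split; intros H.
  - apply Hinc', Hinc, H.
  - apply Hinc, Hinc', H.
Qed.

Definition copies (K : Type) (M : multigraph) : multigraph := {|
  vert := K * vert M;
  edge := K * edge M;
  inc := fun e v => fst e = fst v /\ inc M (snd e) (snd v) |}.

Lemma iso_copies (K K' : Type) (M N : multigraph) (beta : K -> K') :
  bijective beta -> iso M N -> iso (copies K M) (copies K' N).
Proof.
  intros beta_bij [f [g [f_bij [g_bij Hinc]]]].
  exists (fun p => (beta (fst p), f (snd p))), (fun p => (beta (fst p), g (snd p))).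
  split; [|split]; try apply bijective_pair; auto.
  intros e v; simpl; split; intros [H1 H2]; split.
  - congruence.
  - apply Hinc; auto.
  - apply (proj1 beta_bij); auto.
  - apply Hinc; auto.
Qed.

Definition prod_group (G A : group) : group.
Proof.
  refine (Group (gcar G * gcar A)
    (fun p q => (gmul G (fst p) (fst q), gmul A (snd p) (snd q)))
    (gone G, gone A)
    (fun p => (ginv G (fst p), ginv A (snd p))) _ _ _ _ _);
  intros; simpl; f_equal; rewrite ?gmulA, ?gmul1g, ?gmulg1, ?gmulVg, ?gmulgV; auto;
  destruct x; auto.
Defined.

Lemma prod_group_abelian G A : abelian G -> abelian A -> abelian (prod_group G A).
Proof. intros HG HA [a b] [c d]; simpl; f_equal; auto. Qed.

Lemma ginv1 (A : group) : ginv A (gone A) = gone A.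
Proof. rewrite <- (gmulg1 A (ginv A (gone A))). apply gmulVg. Qed.

Lemma gpow_prod (G A : group) (x : G) n :
  gpow (prod_group G A) (x, gone A) n = (gpow G x n, gone A).
Proof. induction n; simpl; auto. rewrite IHn; simpl. rewrite gmul1g; auto. Qed.

Lemma zpow_prod (G A : group) (x : G) z :
  zpow (prod_group G A) (x, gone A) z = (zpow G x z, gone A).
Proof. destruct z; simpl; rewrite ?ginv1; auto; apply gpow_prod. Qed.

Lemma rcoset_prod (G A : group) (s x : G) (a : A) :
  rcoset (prod_group G A) (s, gone A) (x, a) = fun p => rcoset G s x (fst p) /\ snd p = a.
Proof.
  apply functional_extensionality; intros [g b]; apply propositional_extensionality.
  unfold rcoset; simpl. split.
  - intros [z Hz]. rewrite zpow_prod in Hz. simpl in Hz. injection Hz; intros E1 E2.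
    rewrite gmul1g in E1. split; eauto.
  - intros [[z Hz] ->]. exists z. rewrite zpow_prod; simpl. rewrite gmul1g, Hz; auto.
Qed.

Lemma rcoset_self (G : group) (s x : G) : rcoset G s x x.
Proof. exists 0%Z. simpl. rewrite gmul1g; auto. Qed.

Section PhiProd.
Variables (G A : group) (I : Type) (s : I -> G).
Let GA := prod_group G A.
Let sA (i : I) : GA := (s i, gone A).

Lemma Phi_prod_vert_ok (a : A) (v : vert (Phi G I s)) :
  exists y : GA, (fun q : GA => snd (proj1_sig v) (fst q) /\ snd q = a)
     = rcoset GA (sA (fst (proj1_sig v))) y.
Proof.
  destruct v as [[i Q] [x Hx]]; simpl in *. exists (x, a).
  unfold sA, GA. rewrite rcoset_prod, Hx; auto.
Qed.

Definition Phi_prod_vert (p : A * vert (Phi G I s)) : vert (Phi GA I sA) :=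
  exist _ (fst (proj1_sig (snd p)),
           fun q : GA => snd (proj1_sig (snd p)) (fst q) /\ snd q = fst p)
    (Phi_prod_vert_ok (fst p) (snd p)).

Definition Phi_prod_edge (p : A * edge (Phi G I s)) : edge (Phi GA I sA) :=
  exist _ (fst (proj1_sig (snd p)), ((snd (proj1_sig (snd p)), fst p) : GA))
    (proj2_sig (snd p)).

Lemma Phi_prod_vert_bij : bijective Phi_prod_vert.
Proof.
  split.
  - intros [a [[i Q] [x Hx]]] [a' [[i' Q'] [x' Hx']]] E.
    apply (f_equal (@proj1_sig _ _)) in E. simpl in E. injection E; intros EQ Ei. subst i'.
    assert (EQa : forall g b, (Q g /\ b = a) <-> (Q' g /\ b = a')).
    { intros g b. pose proof (f_equal (fun P => P (g, b)) EQ) as H. simpl in H.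
      rewrite H. tauto. }
    assert (Ea : a = a').
    { assert (Qx : Q x) by (simpl in Hx; rewrite Hx; apply rcoset_self).
      apply (EQa x a); auto. }
    subst a'. f_equal. apply sig_eq; simpl. f_equal.
    apply functional_extensionality; intros g. apply propositional_extensionality.
    specialize (EQa g a). tauto.
  - intros [[i P] [[x a] Hx]]. simpl in Hx.
    exists (a, exist _ (i, rcoset G (s i) x) (ex_intro _ x eq_refl)).
    apply sig_eq; simpl. f_equal. rewrite Hx. unfold sA, GA. rewrite rcoset_prod; auto.
Qed.

Lemma Phi_prod_edge_bij : bijective Phi_prod_edge.
Proof.
  split.
  - intros [a e] [a' e'] E. apply (f_equal (@proj1_sig _ _)) in E. simpl in E.
    injection E; intros E3 E2 E1. subst a'. f_equal. apply sig_eq.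
    destruct (proj1_sig e), (proj1_sig e'); simpl in *; subst; auto.
  - intros [[P [g a]] H]. exists (a, exist _ (P, g) H). apply sig_eq; simpl; auto.
Qed.

Lemma Phi_prod_iso : iso (copies A (Phi G I s)) (Phi GA I sA).
Proof.
  exists Phi_prod_vert, Phi_prod_edge.
  split; [apply Phi_prod_vert_bij | split; [apply Phi_prod_edge_bij |]].
  intros [a [[P g] He]] [a' [[i Q] Hv]]. simpl. split.
  - intros [E [H1 H2]]. subst; tauto.
  - intros [H1 [H2 H3]]. subst; tauto.
Qed.
End PhiProd.

Section ComponentDecomposition.
Variables Gamma0 Gamma : multigraph.
Hypothesis Gamma_multigraph : is_multigraph Gamma.
Hypothesis component_iso : forall v : vert Gamma, iso (component Gamma v) Gamma0.

Lemma linked_sym u v : linked Gamma u v -> linked Gamma v u.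
Proof.
  induction 1 as [x y [e [Hx Hy]]| |]; [apply rt_step; exists e; auto | apply rt_refl |].
  eapply rt_trans; eauto.
Qed.

Definition components := {C : vert Gamma -> Prop | exists v, C = linked Gamma v}.

Definition component_of (v : vert Gamma) : components :=
  exist _ (linked Gamma v) (ex_intro _ v eq_refl).

Definition root (C : components) : vert Gamma :=
  proj1_sig (constructive_indefinite_description _ (proj2_sig C)).

Lemma rootE C : proj1_sig C = linked Gamma (root C).
Proof.
  unfold root. destruct (constructive_indefinite_description _ (proj2_sig C)); auto.
Qed.

Lemma components_eq (C C' : components) u :
  linked Gamma (root C) u -> linked Gamma (root C') u -> C = C'.
Proof.
  intros H H'. apply sig_eq. rewrite !rootE.
  apply functional_extensionality; intros x; apply propositional_extensionality.
  split; intros Hx; apply (rt_trans _ _ _ u); auto.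
  - apply (rt_trans _ _ _ (root C)); [apply linked_sym|]; auto.
  - apply (rt_trans _ _ _ (root C')); [apply linked_sym|]; auto.
Qed.

Lemma root_component_of u : linked Gamma (root (component_of u)) u.
Proof. pose proof (rootE (component_of u)) as E. simpl in E. rewrite <- E. apply rt_refl. Qed.

Definition component_vmap v : vert Gamma0 -> vert (component Gamma v) :=
  proj1_sig (constructive_indefinite_description _ (iso_sym _ _ (component_iso v))).

Definition component_emap v : edge Gamma0 -> edge (component Gamma v) :=
  proj1_sig (constructive_indefinite_description _
    (proj2_sig (constructive_indefinite_description _ (iso_sym _ _ (component_iso v))))).

Lemma component_maps_iso v :
  bijective (component_vmap v) /\ bijective (component_emap v) /\
  forall e w, inc Gamma0 e w <->
              inc (component Gamma v) (component_emap v e) (component_vmap v w).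
Proof.
  exact (proj2_sig (constructive_indefinite_description _
    (proj2_sig (constructive_indefinite_description _ (iso_sym _ _ (component_iso v)))))).
Qed.

Definition copies_vert (p : components * vert Gamma0) : vert Gamma :=
  proj1_sig (component_vmap (root (fst p)) (snd p)).

Definition copies_edge (p : components * edge Gamma0) : edge Gamma :=
  proj1_sig (component_emap (root (fst p)) (snd p)).

Lemma copies_edge_linked C e w : inc Gamma (copies_edge (C, e)) w -> linked Gamma (root C) w.
Proof.
  intros Hw. unfold copies_edge in *; simpl in *.
  destruct (proj2_sig (component_emap (root C) e)) as [w0 [Hw0 Hinc0]].
  apply (rt_trans _ _ _ w0); auto. apply rt_step. eexists; eauto.
Qed.

Lemma copies_vert_bij : bijective copies_vert.
Proof.
  split.
  - intros [C w] [C' w'] E. unfold copies_vert in E; simpl in E.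
    assert (CC' : C = C').
    { apply (components_eq _ _ (proj1_sig (component_vmap (root C) w))).
      - apply (proj2_sig (component_vmap (root C) w)).
      - rewrite E. apply (proj2_sig (component_vmap (root C') w')). }
    subst C'. apply sig_eq, (proj1 (proj1 (component_maps_iso (root C)))) in E.
    subst; auto.
  - intros u. destruct (proj2 (proj1 (component_maps_iso (root (component_of u))))
                         (exist _ u (root_component_of u))) as [w Hw].
    exists (component_of u, w). unfold copies_vert; simpl. rewrite Hw; auto.
Qed.

Lemma copies_edge_bij : bijective copies_edge.
Proof.
  split.
  - intros [C e] [C' e'] E.
    assert (CC' : C = C').
    { destruct (proj2_sig (component_emap (root C) e)) as [w [Hw Hinc]].
      apply (components_eq _ _ w); auto.
      apply (copies_edge_linked C' e'). unfold copies_edge in *; simpl in *.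
      rewrite <- E; auto. }
    subst C'. unfold copies_edge in E; simpl in E.
    apply sig_eq, (proj1 (proj1 (proj2 (component_maps_iso (root C))))) in E. subst; auto.
  - intros eps. destruct (Gamma_multigraph eps) as [u [_ [Hu _]]].
    destruct (proj2 (proj1 (proj2 (component_maps_iso (root (component_of u)))))
                (exist _ eps (ex_intro _ u (conj (root_component_of u) Hu)))) as [e He].
    exists (component_of u, e). unfold copies_edge; simpl. rewrite He; auto.
Qed.

Lemma components_decomposition : iso (copies components Gamma0) Gamma.
Proof.
  exists copies_vert, copies_edge.
  split; [apply copies_vert_bij | split; [apply copies_edge_bij |]].
  intros [C e] [C' w]. simpl. split.
  - intros [E H]. subst C'. apply (proj2 (proj2 (component_maps_iso (root C)))) in H.
    exact H.
  - intros H. assert (CC' : C = C').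
    { apply (components_eq _ _ (copies_vert (C', w))).
      - apply (copies_edge_linked C e), H.
      - apply (proj2_sig (component_vmap (root C') w)). }
    subst C'. split; auto. apply (proj2 (proj2 (component_maps_iso (root C)))), H.
Qed.
End ComponentDecomposition.

Lemma Phi_empty_iso (Gamma : multigraph) (G : group) :
  is_multigraph Gamma -> ~ inhabited (vert Gamma) ->
  iso (Phi G Empty_set (fun i : Empty_set => match i with end)) Gamma.
Proof.
  intros Gamma_multigraph Gamma_empty.
  assert (no_edge : edge (Phi G Empty_set (fun i : Empty_set => match i with end)) -> False)
    by (intros [p [[] _]]).
  assert (no_vert : vert (Phi G Empty_set (fun i : Empty_set => match i with end)) -> False)
    by (intros [[[] _] _]).
  exists (fun v => False_rect _ (no_vert v)), (fun e => False_rect _ (no_edge e)).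
  split; [|split].
  - split; [intros x; destruct (no_vert x) | intros y; destruct (Gamma_empty (inhabits y))].
  - split; [intros x; destruct (no_edge x) | intros y].
    destruct (Gamma_multigraph y) as [u _]. destruct (Gamma_empty (inhabits u)).
  - intros e; destruct (no_edge e).
Qed.

Theorem proposition3 (Gamma0 Gamma : multigraph) :
  is_multigraph Gamma ->
  connected Gamma0 ->
  (forall v : vert Gamma, iso (component Gamma v) Gamma0) ->
  (is_Ggraph Gamma0 -> is_Ggraph Gamma) /\
  (is_abelian_Ggraph Gamma0 -> is_abelian_Ggraph Gamma).
Proof.
  intros Gamma_multigraph _ component_iso.
  destruct (classic (inhabited (vert Gamma))) as [[v0]|Gamma_empty].
  - destruct (abelian_group_on_inhabited_type (components Gamma)
                (inhabits (component_of Gamma v0))) as [A [A_abelian [beta beta_bij]]].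
    assert (Phi_prod_Gamma : forall G I s, iso (Phi G I s) Gamma0 ->
              iso (Phi (prod_group G A) I (fun i => (s i, gone A))) Gamma).
    { intros G I s H. apply (iso_trans _ _ _ (iso_sym _ _ (Phi_prod_iso G A I s))).
      apply (iso_trans _ _ _ (iso_copies _ _ _ _ beta beta_bij H)).
      apply components_decomposition; auto. }
    split.
    + intros [G [I [s H]]]. exists (prod_group G A), I, (fun i => (s i, gone A)); auto.
    + intros [G [I [s [G_abelian H]]]]. exists (prod_group G A), I, (fun i => (s i, gone A)).
      split; [apply prod_group_abelian | apply Phi_prod_Gamma]; auto.
  - split; [intros [G _] | intros [G [_ [_ [G_abelian _]]]]];
      exists G, Empty_set, (fun i : Empty_set => match i with end);
      [| split; [exact G_abelian |]]; apply Phi_empty_iso; auto.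
Qed.
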